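(* Let $\kappa$ be an infinite cardinal with $2^\kappa=\kappa^+$. Then for every sequence $\bar p=\langle p_\delta:\delta<\kappa^+\rangle$ of partitions $p_\delta:[\kappa^+]^2\to\theta_\delta$ with $\theta_\delta\le\kappa$, $\kappa^+\nrightarrow_{\bar p}[\kappa\circledast\kappa^+/1\circledast\kappa^+]^2_{\kappa^+}$ holds.
   Context: For $f:[\kappa^+]^2\to\lambda$ and $p:[\kappa^+]^2\to\theta$, $X\subseteq[\kappa^+]^2$ is $(f,p)$-strong if for every $\zeta:\theta\to\lambda$ there is $\{\alpha,\beta\}\in X$ with $f(\alpha,\beta)=\zeta(p(\alpha,\beta))$. $\{\alpha\}\circledast B=\{\{\alpha,\beta\}:\alpha<\beta\in B\}$. The symbol $\kappa^+\nrightarrow_{\bar p}[\kappa\circledast\kappa^+/1\circledast\kappa^+]^2_{\lambda}$ means: there is a single $f:[\kappa^+]^2\to\lambda$ such that for every $\delta$, every $A\in[\kappa^+]^\kappa$ and every $B\in[\kappa^+]^{\kappa^+}$ there is $\alpha\in A$ such that $\{\alpha\}\circledast B$ is $(f,p_\delta)$-strong. *)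

From Stdlib Require Import Classical.

Definition equipotent (X Y : Type) : Prop :=
  exists (f : X -> Y) (g : Y -> X),
    (forall x, g (f x) = x) /\ (forall y, f (g y) = y).

Definition injects (X Y : Type) : Prop :=
  exists f : X -> Y, forall x1 x2, f x1 = f x2 -> x1 = x2.

Definition infinite_type (K : Type) : Prop := injects nat K.

Definition strict_well_order {T : Type} (lt : T -> T -> Prop) : Prop :=
  (forall x, ~ lt x x) /\
  (forall x y z, lt x y -> lt y z -> lt x z) /\
  (forall x y, lt x y \/ x = y \/ lt y x) /\
  well_founded lt.

(* (T, lt) is (order-isomorphic to) the ordinal kappa^+, where kappa = |K|:
   a well-order all of whose proper initial segments have size <= |K|,
   while T itself has size > |K|. *)
Definition is_succ_card_of (K : Type) {T : Type} (lt : T -> T -> Prop) : Prop :=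
  strict_well_order lt /\
  (forall a : T, injects {b : T | lt b a} K) /\
  ~ injects T K.

(* {alpha} circledast B is (f, p)-strong, for a partition p : [T]^2 -> theta
   and colouring f : [T]^2 -> T; pairs {a,b} with a < b are given as
   (f a b), (p a b). *)
Definition star_strong {T theta : Type} (lt : T -> T -> Prop)
  (f : T -> T -> T) (p : T -> T -> theta) (a : T) (B : T -> Prop) : Prop :=
  forall zeta : theta -> T,
    exists b : T, B b /\ lt a b /\ f a b = zeta (p a b).

From Stdlib Require Import Classical ClassicalEpsilon FunctionalExtensionality
  ProofIrrelevance Wf_nat Inverse_Image Lia Cantor.

(* Since 2^kappa = kappa^+, there are only kappa^+ "tasks" (delta, e, z): an
   index delta, an injective kappa-sequence e of points and, for every k, a
   colouring z k of the cells of p_delta (coded in kappa).  Code them by points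
   of kappa^+.  At a point b at most kappa tasks have code below b; choosing by
   transfinite recursion, they are served by pairwise distinct points e k, and
   f (e k) b is defined as the colour z k prescribes for the cell of {e k, b}.
   If every a in A (of size kappa) had a colouring zeta_a escaping f on
   {a} * B, the task (delta, an enumeration of A, zeta) would be served at some
   b in B above its code and above A (regularity of kappa^+), a contradiction.
   The cardinal arithmetic needs kappa * kappa = kappa, proved by Hessenberg's
   argument for the well-order that kappa inherits from kappa^+. *)

Lemma proj1_sig_inj (X : Type) (P : X -> Prop) (u v : {x | P x}) :
  proj1_sig u = proj1_sig v -> u = v.
Proof.
  destruct u as [x Hx], v as [y Hy]; simpl; intros <-.
  f_equal; apply proof_irrelevance.
Qed.

Lemma injects_refl (X : Type) : injects X X.
Proof. exists (fun x => x); auto. Qed.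

Lemma injects_trans (X Y Z : Type) : injects X Y -> injects Y Z -> injects X Z.
Proof. intros [f Hf] [g Hg]; exists (fun x => g (f x)); auto. Qed.

Lemma injects_of_equipotent (X Y : Type) : equipotent X Y -> injects X Y.
Proof.
  intros [f [g [Hgf _]]]; exists f; intros a b E.
  now rewrite <- (Hgf a), <- (Hgf b), E.
Qed.

Lemma injects_of_equipotent_sym (X Y : Type) : equipotent X Y -> injects Y X.
Proof.
  intros [f [g [_ Hfg]]]; exists g; intros a b E.
  now rewrite <- (Hfg a), <- (Hfg b), E.
Qed.

Lemma injects_prod (X Y X' Y' : Type) :
  injects X X' -> injects Y Y' -> injects (X * Y) (X' * Y').
Proof.
  intros [f Hf] [g Hg]; exists (fun u => (f (fst u), g (snd u))).
  intros [a b] [c d] E; injection E; intros; f_equal; auto.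
Qed.

Lemma injects_sum (X Y X' Y' : Type) :
  injects X X' -> injects Y Y' -> injects (X + Y) (X' + Y').
Proof.
  intros [f Hf] [g Hg].
  exists (fun u => match u with inl a => inl (f a) | inr b => inr (g b) end).
  intros [a|a] [b|b] E; inversion E; f_equal; auto.
Qed.

Lemma injective_left_inverse (X Y : Type) (f : X -> Y) :
  X -> (forall a b, f a = f b -> a = b) -> exists g : Y -> X, forall x, g (f x) = x.
Proof.
  intros x0 Hf.
  exists (fun y => match excluded_middle_informative (exists x, f x = y) with
                   | left H => proj1_sig (constructive_indefinite_description _ H)
                   | right _ => x0 end).
  intros x; destruct (excluded_middle_informative _) as [H|H].
  - destruct (constructive_indefinite_description _ H); simpl; auto.
  - exfalso; eauto.
Qed.

Lemma injects_arrow_dom (X Y C : Type) : X -> injects X Y -> injects (X -> C) (Y -> C).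
Proof.
  intros x0 [f Hf]; destruct (injective_left_inverse X Y f x0 Hf) as [g Hg].
  exists (fun u y => u (g y)); intros u v E.
  apply functional_extensionality; intros x.
  rewrite <- (Hg x); exact (f_equal (fun w => w (f x)) E).
Qed.

Lemma injects_arrow_cod (C X Y : Type) : injects X Y -> injects (C -> X) (C -> Y).
Proof.
  intros [f Hf]; exists (fun u c => f (u c)); intros u v E.
  apply functional_extensionality; intros c.
  apply Hf; exact (f_equal (fun w => w c) E).
Qed.

Lemma injects_curry (X Y C : Type) : injects (X -> Y -> C) (X * Y -> C).
Proof.
  exists (fun u (w : X * Y) => u (fst w) (snd w)); intros u v E.
  apply functional_extensionality; intros x; apply functional_extensionality; intros y.
  exact (f_equal (fun w => w (x, y)) E).
Qed.

Lemma injects_square_bool_arrow (X : Type) : injects (X * X) (bool -> X).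
Proof.
  exists (fun (u : X * X) (b : bool) => if b then fst u else snd u); intros [a b] [c d] E.
  f_equal; [exact (f_equal (fun w => w true) E) | exact (f_equal (fun w => w false) E)].
Qed.

Lemma injects_singletons (X : Type) : injects X (X -> bool).
Proof.
  exists (fun x y => if excluded_middle_informative (y = x) then true else false).
  intros a b E; apply (f_equal (fun u => u a)) in E.
  destruct (excluded_middle_informative (a = a)), (excluded_middle_informative (a = b));
    congruence.
Qed.

Lemma nat_pair_injects_nat : injects (nat * nat) nat.
Proof.
  exists Cantor.to_nat; intros a b E.
  now rewrite <- (Cantor.cancel_of_to a), <- (Cantor.cancel_of_to b), E.
Qed.

(* Hilbert's hotel: [n] goes to [i (2n)], and a point [i m] of the image of
   [i : nat -> K] moves to [i (2m+1)]. *)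
Lemma nat_sum_injects (K : Type) : infinite_type K -> injects (nat + K) K.
Proof.
  intros [i Hi].
  set (shift k := match excluded_middle_informative (exists m, i m = k) with
                  | left H => i (2 * proj1_sig (constructive_indefinite_description _ H) + 1)
                  | right _ => k end).
  assert (Hshift : forall k, (exists m, i m = k /\ shift k = i (2 * m + 1)) \/
                             ((forall m, i m <> k) /\ shift k = k)).
  { intros k; unfold shift; destruct (excluded_middle_informative _) as [H|H].
    - left; destruct (constructive_indefinite_description _ H) as [m Hm]; eauto.
    - right; split; eauto. }
  exists (fun s => match s with inl n => i (2 * n) | inr k => shift k end).
  intros [n|k] [n'|k'] E.
  - apply Hi in E; f_equal; lia.
  - destruct (Hshift k') as [[m [<- Hm]] | [Hk' Hm]]; rewrite Hm in E.
    + apply Hi in E; lia.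
    + exfalso; eapply Hk'; eauto.
  - destruct (Hshift k) as [[m [<- Hm]] | [Hk Hm]]; rewrite Hm in E.
    + apply Hi in E; lia.
    + exfalso; eapply Hk; eauto.
  - f_equal.
    destruct (Hshift k) as [[m [<- Hm]] | [Hk Hm]], (Hshift k') as [[m' [<- Hm']] | [Hk' Hm']];
      rewrite Hm, Hm' in E.
    + apply Hi in E; f_equal; lia.
    + exfalso; eapply Hk'; eauto.
    + exfalso; eapply Hk; eauto.
    + exact E.
Qed.

Lemma unit_sum_injects (K : Type) : infinite_type K -> injects (unit + K) K.
Proof.
  intros HK; eapply injects_trans; [|exact (nat_sum_injects K HK)].
  apply injects_sum; [exists (fun _ => 0); intros [] []; auto | apply injects_refl].
Qed.

Lemma strict_well_order_nat : strict_well_order Peano.lt.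
Proof.
  split; [|split; [|split]]; [intros; lia | intros; lia | intros; lia | exact lt_wf].
Qed.

Lemma strict_well_order_inverse_image (X Y : Type) (R : Y -> Y -> Prop) (f : X -> Y) :
  (forall a b, f a = f b -> a = b) -> strict_well_order R ->
  strict_well_order (fun a b => R (f a) (f b)).
Proof.
  intros Hf [irr [tr [tot wf]]]; split; [|split; [|split]].
  - intros a; apply irr.
  - intros a b c; apply tr.
  - intros a b; destruct (tot (f a) (f b)) as [|[E|]]; auto.
  - exact (wf_inverse_image X Y R f wf).
Qed.

Definition sum_order {A B : Type} (RA : A -> A -> Prop) (RB : B -> B -> Prop)
  (u v : A + B) : Prop :=
  match u, v with
  | inl a, inl a' => RA a a'
  | inl _, inr _ => True
  | inr _, inl _ => False
  | inr b, inr b' => RB b b'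
  end.

Lemma strict_well_order_sum (A B : Type) (RA : A -> A -> Prop) (RB : B -> B -> Prop) :
  strict_well_order RA -> strict_well_order RB -> strict_well_order (sum_order RA RB).
Proof.
  intros [irrA [trA [totA wfA]]] [irrB [trB [totB wfB]]]; split; [|split; [|split]].
  - intros [a|b]; simpl; auto.
  - intros [a|a] [b|b] [c|c]; simpl; eauto; tauto.
  - intros [a|a] [b|b]; simpl; auto.
    + destruct (totA a b) as [|[<-|]]; auto.
    + destruct (totB a b) as [|[<-|]]; auto.
  - assert (HA : forall a, Acc (sum_order RA RB) (inl a)).
    { intros a; induction (wfA a) as [a _ IH]; constructor.
      intros [a'|b'] H; simpl in H; [auto | contradiction]. }
    intros [a|b]; auto.
    induction (wfB b) as [b _ IH]; constructor; intros [a'|b'] H; simpl in H; auto.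
Qed.

Definition lex_order {A B : Type} (RA : A -> A -> Prop) (RB : B -> B -> Prop)
  (x y : A * B) : Prop :=
  RA (fst x) (fst y) \/ (fst x = fst y /\ RB (snd x) (snd y)).

Lemma strict_well_order_lex (A B : Type) (RA : A -> A -> Prop) (RB : B -> B -> Prop) :
  strict_well_order RA -> strict_well_order RB -> strict_well_order (lex_order RA RB).
Proof.
  unfold lex_order.
  intros [irrA [trA [totA wfA]]] [irrB [trB [totB wfB]]]; split; [|split; [|split]].
  - intros [a b] [H|[_ H]]; simpl in H; [eapply irrA | eapply irrB]; eauto.
  - intros [a b] [a' b'] [a'' b''];
      simpl; intros [H|[<- H]] [H'|[<- H']]; eauto.
  - intros [a b] [a' b']; simpl.
    destruct (totA a a') as [|[<-|]]; auto.
    destruct (totB b b') as [|[<-|]]; auto.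
  - intros [a b]; revert b; induction (wfA a) as [a _ IHa]; intros b.
    induction (wfB b) as [b _ IHb]; constructor.
    intros [a' b'] [H|[E H]]; simpl in *; [auto | subst; auto].
Qed.

Section DistinctRepresentatives.
Variables (J Y Src : Type) (R : J -> J -> Prop) (S : J -> Y -> Prop).
Hypothesis R_wo : strict_well_order R.
Hypothesis R_segments_small : forall j, ~ injects Src {j' | R j' j}.
Hypothesis S_large : forall j, injects Src {y | S j y}.

(* The values chosen below [j] form an image of a small segment, so they cannot
   exhaust the large set [S j]. *)
Lemma fresh_representative j (chosen : forall j', R j' j -> Y) :
  exists y, S j y /\ forall j' (H : R j' j), chosen j' H <> y.
Proof.
  apply NNPP; intro N.
  assert (Hcov : forall y, S j y -> exists j', R j' j /\ exists H, chosen j' H = y).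
  { intros y Hy; apply NNPP; intro N2; apply N; exists y; split; auto.
    intros j' H E; apply N2; eauto. }
  destruct (S_large j) as [i Hi]; apply (R_segments_small j).
  exists (fun s => let e := constructive_indefinite_description _ (Hcov _ (proj2_sig (i s))) in
                   exist (fun j' => R j' j) (proj1_sig e) (proj1 (proj2_sig e))).
  intros s1 s2 E; simpl in E.
  destruct (constructive_indefinite_description _ (Hcov _ (proj2_sig (i s1))))
    as [j1 [H1 [P1 E1]]].
  destruct (constructive_indefinite_description _ (Hcov _ (proj2_sig (i s2))))
    as [j2 [H2 [P2 E2]]].
  simpl in E; injection E as <-.
  apply Hi, proj1_sig_inj; rewrite <- E1, <- E2; f_equal; apply proof_irrelevance.
Qed.

Lemma R_wf : well_founded R.
Proof. apply R_wo. Qed.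

Definition choose_fresh j (chosen : forall j', R j' j -> Y) : Y :=
  proj1_sig (constructive_indefinite_description _ (fresh_representative j chosen)).

Definition representative : J -> Y :=
  Fix R_wf (fun _ => Y) choose_fresh.

Lemma representative_eq j :
  representative j = choose_fresh j (fun j' _ => representative j').
Proof.
  apply (Fix_eq R_wf (fun _ => Y) choose_fresh); intros x f g H.
  replace f with g; [reflexivity|].
  apply functional_extensionality_dep; intros y.
  apply functional_extensionality_dep; intros q; auto.
Qed.

Lemma representative_spec j :
  S j (representative j) /\ forall j', R j' j -> representative j' <> representative j.
Proof.
  rewrite (representative_eq j); unfold choose_fresh.
  destruct (constructive_indefinite_description _ _) as [y [Hy Hnew]]; simpl; auto.
Qed.

Theorem distinct_representatives :
  exists rep : J -> Y, (forall j, S j (rep j)) /\ (forall j1 j2, rep j1 = rep j2 -> j1 = j2).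
Proof.
  exists representative; split; [apply representative_spec|].
  intros j1 j2 E; destruct (proj1 (proj2 (proj2 R_wo)) j1 j2) as [H|[<-|H]]; auto.
  - exfalso; exact (proj2 (representative_spec j2) j1 H E).
  - exfalso; exact (proj2 (representative_spec j1) j2 H (eq_sym E)).
Qed.

End DistinctRepresentatives.

Lemma minimal_element (A : Type) (R : A -> A -> Prop) (P : A -> Prop) :
  well_founded R -> (exists x, P x) -> exists x, P x /\ forall y, R y x -> ~ P y.
Proof.
  intros wf [x Hx]; apply NNPP; intro N; revert Hx.
  induction (wf x) as [x _ IH]; intros Hx.
  apply N; exists x; split; [exact Hx|]; intros y Hy Py; exact (IH y Hy Py).
Qed.

(* An initial ordinal: below the least [x] whose segment is as large as [K],
   transported back to [K]. *)
Lemma initial_well_order (K : Type) (W : K -> K -> Prop) :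
  strict_well_order W ->
  exists R : K -> K -> Prop, strict_well_order R /\ forall k, ~ injects K {k' | R k' k}.
Proof.
  intros W_wo.
  destruct (classic (exists x, injects K {y | W y x})) as [Hlarge|Hsmall].
  - destruct (minimal_element K W _ (proj2 (proj2 (proj2 W_wo))) Hlarge)
      as [x [[i Hi] Hmin]].
    exists (fun a b => W (proj1_sig (i a)) (proj1_sig (i b))); split.
    + apply strict_well_order_inverse_image; auto.
      intros a b E; apply Hi, proj1_sig_inj; exact E.
    + intros k [g Hg]; apply (Hmin (proj1_sig (i k)) (proj2_sig (i k))).
      exists (fun a => exist (fun y => W y _) (proj1_sig (i (proj1_sig (g a)))) (proj2_sig (g a))).
      intros a b E; injection E as E; apply Hg, proj1_sig_inj, Hi, proj1_sig_inj, E.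
  - exists W; split; auto; intros k H; apply Hsmall; eauto.
Qed.

Corollary distinct_representatives_of_injects (J Y K : Type) (S : J -> Y -> Prop) :
  (exists W : K -> K -> Prop, strict_well_order W) -> injects J K ->
  (forall j, injects K {y | S j y}) ->
  exists rep : J -> Y, (forall j, S j (rep j)) /\ (forall j1 j2, rep j1 = rep j2 -> j1 = j2).
Proof.
  intros [W W_wo] [c Hc] HS.
  destruct (initial_well_order K W W_wo) as [R [R_wo R_small]].
  apply (distinct_representatives J Y K (fun j1 j2 => R (c j1) (c j2)) S); auto.
  - apply strict_well_order_inverse_image; auto.
  - intros j [g Hg]; apply (R_small (c j)).
    exists (fun k => exist (fun k' => R k' (c j)) (c (proj1_sig (g k))) (proj2_sig (g k))).
    intros a b E; injection E as E; apply Hg, proj1_sig_inj, Hc, E.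
Qed.

Section Hessenberg.
Variables (X : Type) (ltX : X -> X -> Prop).
Hypothesis ltX_wo : strict_well_order ltX.

Definition vlt : nat + X -> nat + X -> Prop := sum_order Peano.lt ltX.
Definition vle (u v : nat + X) : Prop := u = v \/ vlt u v.

Lemma vlt_wo : strict_well_order vlt.
Proof. apply strict_well_order_sum; [exact strict_well_order_nat | exact ltX_wo]. Qed.

Lemma vle_trans u v w : vle u v -> vle v w -> vle u w.
Proof.
  destruct vlt_wo as [_ [tr _]]; unfold vle.
  intros [<-|H] [<-|H']; eauto.
Qed.

Definition vmax (u v : nat + X) : nat + X :=
  if excluded_middle_informative (vlt u v) then v else u.

Lemma vmax_cases u v : vmax u v = u \/ vmax u v = v.
Proof. unfold vmax; destruct (excluded_middle_informative _); auto. Qed.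

Lemma vle_vmax_l u v : vle u (vmax u v).
Proof. unfold vmax, vle; destruct (excluded_middle_informative _); auto. Qed.

Lemma vle_vmax_r u v : vle v (vmax u v).
Proof.
  unfold vmax, vle; destruct (excluded_middle_informative _) as [|N]; auto.
  destruct (proj1 (proj2 (proj2 vlt_wo)) u v) as [|[|]]; auto; contradiction.
Qed.

(* [seg z] is the ordinal omega + z, so it is infinite even when [z] is minimal. *)
Definition below (z : X) (u : nat + X) : Prop :=
  match u with inl _ => True | inr x => ltX x z end.
Definition seg (z : X) : Type := {u | below z u}.

Lemma nat_injects_seg z : injects nat (seg z).
Proof. exists (fun n => exist (below z) (inl n) I); intros a b E; injection E; auto. Qed.

Lemma seg_mono y z : ltX y z -> injects (seg y) (seg z).
Proof.
  destruct ltX_wo as [_ [tr _]]; intros Hyz.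
  assert (Hbelow : forall u, below y u -> below z u)
    by (intros [n|x]; simpl; eauto).
  exists (fun u => exist (below z) (proj1_sig u) (Hbelow _ (proj2_sig u))).
  intros a b E; apply proj1_sig_inj; exact (f_equal (@proj1_sig _ _) E).
Qed.

Lemma seg_injects_nat_of_minimal z : (forall y, ~ ltX y z) -> injects (seg z) nat.
Proof.
  intros Hmin; exists (fun u => match proj1_sig u with inl n => n | inr _ => 0 end).
  intros [[a|a] Ha] [[b|b] Hb] E; simpl in *;
    try (exfalso; eapply Hmin; eassumption).
  subst; apply proj1_sig_inj; reflexivity.
Qed.

Lemma le_inl_injects_nat n : injects {u | vle u (inl n)} nat.
Proof.
  exists (fun u => match proj1_sig u with inl a => a | inr _ => 0 end).
  intros [[a|a] Ha] [[b|b] Hb] E; simpl in *;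
    try (destruct Ha as [Ha|Ha]; [discriminate | contradiction]);
    try (destruct Hb as [Hb|Hb]; [discriminate | contradiction]).
  subst; apply proj1_sig_inj; reflexivity.
Qed.

(* omega + (x + 1) embeds into omega + x: [x] goes to [0], [n] to [n + 1]. *)
Lemma le_inr_injects_seg x : injects {u | vle u (inr x)} (seg x).
Proof.
  destruct ltX_wo as [irr [_ [tot _]]].
  exists (fun u => match proj1_sig u with
                   | inl n => exist (below x) (inl (S n)) I
                   | inr w => match excluded_middle_informative (ltX w x) with
                              | left H => exist (below x) (inr w) H
                              | right _ => exist (below x) (inl 0) I end end).
  assert (Heq : forall w, vle (inr w) (inr x) -> ~ ltX w x -> w = x)
    by (intros w [E|H] N; [injection E; auto | contradiction]).
  intros [[a|a] Ha] [[b|b] Hb] E; simpl in E.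
  - injection E as ->; apply proj1_sig_inj; reflexivity.
  - destruct (excluded_middle_informative (ltX b x)); discriminate.
  - destruct (excluded_middle_informative (ltX a x)); discriminate.
  - apply proj1_sig_inj; simpl; f_equal.
    destruct (excluded_middle_informative (ltX a x)), (excluded_middle_informative (ltX b x));
      try discriminate.
    + injection E; auto.
    + now rewrite (Heq a Ha n), (Heq b Hb n0).
Qed.

(* Pairs are ordered first by their maximum, then lexicographically, so that
   the pairs below [(u, v)] have both coordinates at most [vmax u v]. *)
Definition pair_key {z} (j : seg z * seg z) : (nat + X) * ((nat + X) * (nat + X)) :=
  (vmax (proj1_sig (fst j)) (proj1_sig (snd j)), (proj1_sig (fst j), proj1_sig (snd j))).

Definition pair_lt z (j j' : seg z * seg z) : Prop :=
  lex_order vlt (lex_order vlt vlt) (pair_key j) (pair_key j').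

Lemma pair_lt_wo z : strict_well_order (pair_lt z).
Proof.
  apply (strict_well_order_inverse_image _ _ _ (@pair_key z)).
  - intros [a b] [c d] E; injection E as _ Ea Eb.
    f_equal; apply proj1_sig_inj; assumption.
  - apply strict_well_order_lex; [|apply strict_well_order_lex]; exact vlt_wo.
Qed.

Lemma pair_segment_injects z (j : seg z * seg z) :
  let m := vmax (proj1_sig (fst j)) (proj1_sig (snd j)) in
  injects {j' | pair_lt z j' j} ({u | vle u m} * {u | vle u m}).
Proof.
  intros m.
  assert (Hm : forall j', pair_lt z j' j ->
             vle (proj1_sig (fst j')) m /\ vle (proj1_sig (snd j')) m).
  { intros j' H.
    assert (Hmax : vle (vmax (proj1_sig (fst j')) (proj1_sig (snd j'))) m)
      by (destruct H as [H|[E _]]; [right; exact H | left; exact E]).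
    split; eapply vle_trans; [apply vle_vmax_l | exact Hmax | apply vle_vmax_r | exact Hmax]. }
  exists (fun s => (exist (fun u => vle u m) _ (proj1 (Hm _ (proj2_sig s))),
                    exist (fun u => vle u m) _ (proj2 (Hm _ (proj2_sig s))))).
  intros [[a b] Hs] [[c d] Hs'] E; injection E as E1 E2.
  apply proj1_sig_inj; simpl; f_equal; apply proj1_sig_inj; assumption.
Qed.

Lemma below_vmax z u v : below z u -> below z v -> below z (vmax u v).
Proof. intros Hu Hv; destruct (vmax_cases u v) as [->| ->]; assumption. Qed.

Lemma pair_segment_small z y0 :
  ltX y0 z -> (forall y, ltX y z -> injects (seg y * seg y) (seg y)) ->
  forall j, exists y, ltX y z /\ injects {j' | pair_lt z j' j} (seg y).
Proof.
  intros Hy0 IH j; pose proof (pair_segment_injects z j) as Hj; simpl in Hj.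
  pose proof (below_vmax z _ _ (proj2_sig (fst j)) (proj2_sig (snd j))) as Hm.
  destruct (vmax (proj1_sig (fst j)) (proj1_sig (snd j))) as [n|x]; simpl in Hm.
  - exists y0; split; [exact Hy0|].
    eapply injects_trans; [exact Hj|].
    eapply injects_trans; [apply injects_prod; apply le_inl_injects_nat|].
    eapply injects_trans; [exact nat_pair_injects_nat | apply nat_injects_seg].
  - exists x; split; [exact Hm|].
    eapply injects_trans; [exact Hj|].
    eapply injects_trans; [apply injects_prod; apply le_inr_injects_seg | apply IH; exact Hm].
Qed.

(* Hessenberg's theorem, by induction on [z]: either [seg z] already injects
   into a smaller [seg y], or all pairs are enumerated along [pair_lt z] by
   distinct points of [seg z], every proper segment of pairs being small. *)
Theorem seg_square_injects z : injects (seg z * seg z) (seg z).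
Proof.
  induction (proj2 (proj2 (proj2 ltX_wo)) z) as [z _ IH].
  destruct (classic (exists y, ltX y z /\ injects (seg z) (seg y))) as [[y [Hyz Hzy]]|Hinit].
  { eapply injects_trans; [apply injects_prod; exact Hzy|].
    eapply injects_trans; [apply IH; exact Hyz | apply seg_mono; exact Hyz]. }
  destruct (classic (exists y0, ltX y0 z)) as [[y0 Hy0]|Hmin].
  - destruct (distinct_representatives (seg z * seg z) (seg z) (seg z) (pair_lt z)
                (fun _ _ => True) (pair_lt_wo z)) as [rep [_ Hrep]].
    + intros j Hj; destruct (pair_segment_small z y0 Hy0 IH j) as [y [Hy Hjy]].
      apply Hinit; exists y; split; [exact Hy | eapply injects_trans; eassumption].
    + intros _; exists (fun u => exist (fun _ => True) u I); intros a b E; injection E; auto.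
    + exists rep; exact Hrep.
  - assert (Hnat : injects (seg z) nat)
      by (apply seg_injects_nat_of_minimal; intros y Hy; apply Hmin; eauto).
    eapply injects_trans; [apply injects_prod; exact Hnat|].
    eapply injects_trans; [exact nat_pair_injects_nat | apply nat_injects_seg].
Qed.

End Hessenberg.

Lemma square_injects_of_well_order (K : Type) (W : K -> K -> Prop) :
  strict_well_order W -> infinite_type K -> injects (K * K) K.
Proof.
  intros W_wo HK.
  set (ltX := sum_order W (fun _ _ : unit => False)).
  assert (ltX_wo : strict_well_order ltX).
  { apply strict_well_order_sum; auto.
    split; [|split; [|split]]; auto; [intros [] []; auto | intros a; constructor; contradiction]. }
  set (top := inr tt : K + unit).
  assert (HK_seg : injects K (seg _ ltX top)).
  { exists (fun k => exist (below _ ltX top) (inr (inl k)) I).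
    intros a b E; injection E; auto. }
  assert (Hseg_K : injects (seg _ ltX top) K).
  { eapply injects_trans; [|exact (nat_sum_injects K HK)].
    exists (fun u => match proj1_sig u with
                     | inl n => inl n | inr (inl k) => inr k | inr (inr _) => inl 0 end).
    intros [[a|[a|[]]] Ha] [[b|[b|[]]] Hb] E; simpl in *; try contradiction; try discriminate;
      injection E as ->; apply proj1_sig_inj; reflexivity. }
  eapply injects_trans; [apply injects_prod; exact HK_seg|].
  eapply injects_trans; [apply seg_square_injects; exact ltX_wo | exact Hseg_K].
Qed.

Section SuccessorCardinal.
Variables (K T : Type) (lt : T -> T -> Prop).
Hypothesis K_infinite : infinite_type K.
Hypothesis T_succ : is_succ_card_of K lt.
Hypothesis T_power : equipotent (K -> bool) T.

Lemma lt_wo : strict_well_order lt.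
Proof. apply T_succ. Qed.

Lemma lt_trans x y z : lt x y -> lt y z -> lt x z.
Proof. apply lt_wo. Qed.

Lemma lt_total x y : lt x y \/ x = y \/ lt y x.
Proof. apply lt_wo. Qed.

Lemma segment_injects_K a : injects {b | lt b a} K.
Proof. apply T_succ. Qed.

Lemma T_not_injects_K : ~ injects T K.
Proof. apply T_succ. Qed.

Lemma K_injects_T : injects K T.
Proof.
  eapply injects_trans; [apply injects_singletons | apply injects_of_equipotent, T_power].
Qed.

Lemma K_well_order : exists W : K -> K -> Prop, strict_well_order W.
Proof.
  destruct K_injects_T as [f Hf].
  exists (fun a b => lt (f a) (f b)); apply strict_well_order_inverse_image; auto.
  exact lt_wo.
Qed.

Lemma K_square_injects : injects (K * K) K.
Proof.
  destruct K_well_order as [W W_wo]; exact (square_injects_of_well_order K W W_wo K_infinite).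
Qed.

Lemma K_arrow_T_injects : injects (K -> T) T.
Proof.
  destruct K_infinite as [i _].
  eapply injects_trans; [apply injects_arrow_cod, injects_of_equipotent_sym, T_power|].
  eapply injects_trans; [apply injects_curry|].
  eapply injects_trans; [apply (injects_arrow_dom _ _ _ (i 0, i 0) K_square_injects)|].
  apply injects_of_equipotent, T_power.
Qed.

Lemma T_square_injects : injects (T * T) T.
Proof.
  destruct K_infinite as [i Hi].
  assert (Hbool : injects bool K)
    by (exists (fun b : bool => if b then i 0 else i 1);
        intros [|] [|] E; auto; apply Hi in E; discriminate).
  eapply injects_trans; [apply injects_square_bool_arrow|].
  eapply injects_trans; [apply (injects_arrow_dom _ _ _ true Hbool) | exact K_arrow_T_injects].
Qed.

(* Regularity of kappa^+: otherwise every [x : T] lies below or at some [a] in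
   [A], and [x] is coded by [a] together with its position below [a]. *)
Lemma bounded_of_injects_K (A : T -> Prop) :
  injects {x | A x} K -> exists c, forall a, A a -> lt a c.
Proof.
  intros [iA HiA]; apply NNPP; intro Hunb.
  assert (Hcof : forall x, exists a, A a /\ (x = a \/ lt x a)).
  { intros x; apply NNPP; intro N; apply Hunb; exists x; intros a Ha.
    destruct (lt_total a x) as [|[<-|H]]; auto; exfalso; apply N; eauto. }
  set (seg_code a := proj1_sig (constructive_indefinite_description _ (segment_injects_K a))).
  assert (Hseg_code : forall a u v, seg_code a u = seg_code a v -> u = v)
    by (intros a; exact (proj2_sig (constructive_indefinite_description _ (segment_injects_K a)))).
  assert (HK : injects (K * (unit + K)) K).
  { eapply injects_trans; [|exact K_square_injects].
    apply injects_prod; [apply injects_refl | apply unit_sum_injects; exact K_infinite]. }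
  apply T_not_injects_K; eapply injects_trans; [|exact HK].
  set (a_of x := constructive_indefinite_description _ (Hcof x)).
  exists (fun x =>
    (iA (exist A (proj1_sig (a_of x)) (proj1 (proj2_sig (a_of x)))),
     match excluded_middle_informative (lt x (proj1_sig (a_of x))) with
     | left H => inr (seg_code _ (exist _ x H))
     | right _ => inl tt end)).
  intros x y E; injection E as E1 E2; apply HiA in E1; injection E1 as E1.
  destruct (a_of x) as [a [Aa Hxa]], (a_of y) as [b [Ab Hyb]]; simpl in *; subst b.
  destruct (excluded_middle_informative (lt x a)) as [Lx|Lx],
           (excluded_middle_informative (lt y a)) as [Ly|Ly]; try discriminate.
  - injection E2 as E2; apply Hseg_code in E2; injection E2; auto.
  - destruct Hxa, Hyb; subst; auto; contradiction.
Qed.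

Lemma unbounded_of_T_injects (B : T -> Prop) :
  injects T {x | B x} -> forall x y, exists b, B b /\ lt x b /\ lt y b.
Proof.
  intros HB.
  assert (Habove : forall x, exists b, B b /\ lt x b).
  { intros x; apply NNPP; intro N; apply T_not_injects_K.
    assert (Hle : forall u : {x | B x}, proj1_sig u = x \/ lt (proj1_sig u) x).
    { intros [u Bu]; simpl; destruct (lt_total u x) as [|[|]]; auto; exfalso; eauto. }
    eapply injects_trans; [exact HB|].
    eapply injects_trans; [|apply unit_sum_injects; exact K_infinite].
    eapply injects_trans; [|apply injects_sum; [apply injects_refl | apply (segment_injects_K x)]].
    exists (fun u => match excluded_middle_informative (lt (proj1_sig u) x) with
                     | left H => inr (exist _ (proj1_sig u) H) | right _ => inl tt end).
    intros u v E.
    destruct (excluded_middle_informative (lt (proj1_sig u) x)),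
             (excluded_middle_informative (lt (proj1_sig v) x)); try discriminate.
    - injection E; intros; apply proj1_sig_inj; auto.
    - apply proj1_sig_inj; destruct (Hle u), (Hle v); congruence. }
  intros x y; destruct (lt_total x y) as [H|[<-|H]].
  - destruct (Habove y) as [b [Bb Hb]]; eauto using lt_trans.
  - destruct (Habove x) as [b [Bb Hb]]; eauto.
  - destruct (Habove x) as [b [Bb Hb]]; eauto using lt_trans.
Qed.

(* The colourings [z k] of a task read cells of [p delta] through their codes
   in [K] (see [theta_code]), so that tasks for all [delta] form one type. *)
Definition task : Type := (T * (K -> T) * (K -> K -> T))%type.
Definition task_delta (t : task) : T := fst (fst t).
Definition task_enum (t : task) : K -> T := snd (fst t).
Definition task_colours (t : task) : K -> K -> T := snd t.

Lemma task_injects_T : injects task T.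
Proof.
  eapply injects_trans;
    [apply injects_prod; [apply injects_prod; [apply injects_refl | exact K_arrow_T_injects]
                         | apply (injects_trans _ (K -> T));
                             [apply injects_arrow_cod | ]; exact K_arrow_T_injects]|].
  eapply injects_trans; [apply injects_prod; [exact T_square_injects | apply injects_refl]|].
  exact T_square_injects.
Qed.

Definition task_code : task -> T :=
  proj1_sig (constructive_indefinite_description _ task_injects_T).

Lemma task_code_inj t t' : task_code t = task_code t' -> t = t'.
Proof. exact (proj2_sig (constructive_indefinite_description _ task_injects_T) t t'). Qed.

Definition pending (b : T) (t : task) : Prop :=
  lt (task_code t) b /\ forall k1 k2, task_enum t k1 = task_enum t k2 -> k1 = k2.

Lemma pending_injects_K b : injects {t | pending b t} K.
Proof.
  eapply injects_trans; [|exact (segment_injects_K b)].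
  exists (fun j => exist (fun x => lt x b) (task_code (proj1_sig j)) (proj1 (proj2_sig j))).
  intros j j' E; injection E as E; apply proj1_sig_inj, task_code_inj, E.
Qed.

Lemma pick_exists b :
  exists pick : {t | pending b t} -> T,
    (forall j, exists k, task_enum (proj1_sig j) k = pick j) /\
    (forall j j', pick j = pick j' -> j = j').
Proof.
  apply (distinct_representatives_of_injects _ _ K
           (fun j y => exists k, task_enum (proj1_sig j) k = y));
    [exact K_well_order | apply pending_injects_K|].
  intros j.
  exists (fun k => exist (fun y => exists k, task_enum (proj1_sig j) k = y)
                         (task_enum (proj1_sig j) k) (ex_intro _ k eq_refl)).
  intros k k' E; injection E as E; exact (proj2 (proj2_sig j) k k' E).
Qed.

Definition pick b : {t | pending b t} -> T :=
  proj1_sig (constructive_indefinite_description _ (pick_exists b)).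

Lemma pick_spec b :
  (forall j, exists k, task_enum (proj1_sig j) k = pick b j) /\
  (forall j j', pick b j = pick b j' -> j = j').
Proof. exact (proj2_sig (constructive_indefinite_description _ (pick_exists b))). Qed.

Variables (theta : T -> Type) (p : forall delta : T, T -> T -> theta delta).
Hypothesis theta_small : forall delta, injects (theta delta) K.

Definition theta_code delta : theta delta -> K :=
  proj1_sig (constructive_indefinite_description _ (theta_small delta)).

Lemma theta_code_inj delta u v : theta_code delta u = theta_code delta v -> u = v.
Proof. exact (proj2_sig (constructive_indefinite_description _ (theta_small delta)) u v). Qed.

(* [a] serves at [b] the pending task that picked it, if any; otherwise the
   value [a] is arbitrary. *)
Definition colouring (a b : T) : T :=
  match excluded_middle_informative
          (exists jk : {t | pending b t} * K,
              task_enum (proj1_sig (fst jk)) (snd jk) = a /\ pick b (fst jk) = a) with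
  | left H =>
      let jk := proj1_sig (constructive_indefinite_description _ H) in
      let t := proj1_sig (fst jk) in
      task_colours t (snd jk) (theta_code (task_delta t) (p (task_delta t) a b))
  | right _ => a
  end.

Lemma colouring_at_pick b t (Ht : pending b t) k :
  task_enum t k = pick b (exist _ t Ht) ->
  colouring (task_enum t k) b =
    task_colours t k (theta_code (task_delta t) (p (task_delta t) (task_enum t k) b)).
Proof.
  intros Hk; unfold colouring; destruct (excluded_middle_informative _) as [H|H].
  - destruct (constructive_indefinite_description _ H) as [[[t' Ht'] k'] [E1 E2]]; simpl in *.
    rewrite Hk in E2; apply (proj2 (pick_spec b)) in E2; injection E2 as ->.
    rewrite (proj2 Ht k' k E1); reflexivity.
  - exfalso; apply H; exists (exist _ t Ht, k); auto.
Qed.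

Lemma colouring_catches delta (e : K -> T) (z : K -> theta delta -> T) :
  (forall k1 k2, e k1 = e k2 -> k1 = k2) ->
  exists x, forall b, lt x b -> exists k, colouring (e k) b = z k (p delta (e k) b).
Proof.
  intros He; destruct K_infinite as [i _].
  destruct (injective_left_inverse _ _ (theta_code delta) (p delta (e (i 0)) (e (i 0)))
              (theta_code_inj delta)) as [decode Hdecode].
  set (t := (delta, e, fun k m => z k (decode m)) : task).
  exists (task_code t); intros b Hb.
  assert (Ht : pending b t) by (split; assumption).
  destruct (proj1 (pick_spec b) (exist _ t Ht)) as [k Hk].
  exists k; change (e k) with (task_enum t k); rewrite (colouring_at_pick b t Ht k Hk); simpl.
  now rewrite Hdecode.
Qed.

End SuccessorCardinal.

Theorem theorem4p11
  (K : Type) (T : Type) (lt : T -> T -> Prop)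
  (HKinf : infinite_type K)
  (HT : is_succ_card_of K lt)
  (Hgch : equipotent (K -> bool) T)
  (theta : T -> Type)
  (Htheta : forall delta : T, injects (theta delta) K)
  (p : forall delta : T, T -> T -> theta delta) :
  exists f : T -> T -> T,
    forall (delta : T) (A B : T -> Prop),
      equipotent {x : T | A x} K ->
      equipotent {x : T | B x} T ->
      exists a : T, A a /\ star_strong lt f (p delta) a B.
Proof.
  set (f := colouring K T lt HKinf HT Hgch theta p Htheta).
  exists f; intros delta A B HA HB.
  destruct (injects_of_equipotent_sym _ _ HA) as [enum Henum].
  set (e k := proj1_sig (enum k)).
  apply NNPP; intros Hfail.
  assert (Hescape : forall k, exists z : theta delta -> T,
             forall b, B b -> lt (e k) b -> f (e k) b <> z (p delta (e k) b)).
  { intros k; apply NNPP; intros N; apply Hfail.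
    exists (e k); split; [exact (proj2_sig (enum k))|].
    intros z; apply NNPP; intros N'; apply N; exists z.
    intros b Bb Hb E; apply N'; eauto. }
  destruct (choice _ Hescape) as [z Hz].
  destruct (colouring_catches K T lt HKinf HT Hgch theta p Htheta delta e z)
    as [x Hx]; [intros k k' E; apply Henum, proj1_sig_inj, E|].
  destruct (bounded_of_injects_K K T lt HKinf HT Hgch A (injects_of_equipotent _ _ HA))
    as [c Hc].
  destruct (unbounded_of_T_injects K T lt HKinf HT B (injects_of_equipotent_sym _ _ HB) c x)
    as [b [Bb [Hcb Hxb]]].
  destruct (Hx b Hxb) as [k Hk].
  exact (Hz k b Bb (lt_trans K T lt HT _ _ _ (Hc _ (proj2_sig (enum k))) Hcb) Hk).
Qed.
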